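(* $$D_{\mathbb{R},2}\ge D_{\mathbb{R},2}(\ell_\infty^2)=\sup\left\{\left[2t^{4/3}+\left(2\sqrt{t(1-t)}\right)^{4/3}\right]^{3/4}: t\in[1/2,1]\right\}\approx1.8374.$$
   Context: $\ell_\infty^n$ is $\mathbb{R}^n$ with the sup norm; for a polynomial $P$ on $\ell_\infty^n$, $\|P\|=\sup_{x\in[-1,1]^n}|P(x)|$. For $P(x)=\sum_{|\alpha|=m}a_\alpha x^\alpha$ an $m$-homogeneous polynomial, write $\|P\|_{\mathrm{coef}}=\big(\sum_{|\alpha|=m}|a_\alpha|^{\frac{2m}{m+1}}\big)^{\frac{m+1}{2m}}$. $D_{\mathbb{R},m}(\ell_\infty^n)=\sup\{\|P\|_{\mathrm{coef}}/\|P\|: P\neq0 \text{ real $m$-homogeneous on }\ell_\infty^n\}$, and $D_{\mathbb{R},m}=\sup_n D_{\mathbb{R},m}(\ell_\infty^n)$ is the optimal constant in the real polynomial Bohnenblust–Hille inequality $\|P\|_{\mathrm{coef}}\le D\|P\|$. *)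

From Stdlib Require Import Reals Lra List.
Import ListNotations.
Open Scope R_scope.

(* real power for x >= 0 (0^y := 0); Rpower alone would give Rpower 0 y = 1 *)
Definition rpow (x y : R) : R := if Rlt_dec 0 x then Rpower x y else 0.

(* all multi-indices alpha in N^n with |alpha| = m, as lists of length n *)
Fixpoint mindices (n m : nat) : list (list nat) :=
  match n with
  | O => match m with O => [[]] | S _ => [] end
  | S n' => flat_map (fun k => map (cons k) (mindices n' (m - k))) (seq 0 (S m))
  end.

Fixpoint monom (x : nat -> R) (al : list nat) (i : nat) : R :=
  match al with
  | [] => 1
  | k :: r => (x i ^ k) * monom x r (S i)
  end.

Definition hpoly_eval (n m : nat) (a : list nat -> R) (x : nat -> R) : R :=
  fold_right (fun al acc => a al * monom x al 0 + acc) 0 (mindices n m).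

Definition hpoly_nonzero (n m : nat) (a : list nat -> R) : Prop :=
  exists al, In al (mindices n m) /\ a al <> 0.

Definition hpoly_values (n m : nat) (a : list nat -> R) (r : R) : Prop :=
  exists x : nat -> R, (forall i, (i < n)%nat -> -1 <= x i <= 1) /\
                       r = Rabs (hpoly_eval n m a x).

Definition coef_norm (n m : nat) (a : list nat -> R) : R :=
  rpow (fold_right (fun al acc => rpow (Rabs (a al)) (2 * INR m / (INR m + 1)) + acc)
          0 (mindices n m))
       ((INR m + 1) / (2 * INR m)).

Definition BH_ratios (n m : nat) (r : R) : Prop :=
  exists a : list nat -> R, hpoly_nonzero n m a /\
    exists N, is_lub (hpoly_values n m a) N /\ r = coef_norm n m a / N.

Definition BH_fun (t : R) : R :=
  rpow (2 * rpow t (4/3) + rpow (2 * sqrt (t * (1 - t))) (4/3)) (3/4).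

From Stdlib Require Import Reals Lra Psatz List.
Import ListNotations.
Open Scope R_scope.

(* A 2-homogeneous polynomial on R^2 is a quadratic form P = a u^2 + b v^2 + c uv, and
   (||P||_coef)^{4/3} = |a|^{4/3} + |b|^{4/3} + |c|^{4/3}.  Let L be the supremum of
   BH_fun on [1/2,1] and M = L^{4/3}.
   - Upper bound: if |P| <= N on [-1,1]^2 then sum |coef|^{4/3} <= M N^{4/3}.  Using the
     symmetries u -> -u, P -> -P, u <-> v we may assume a >= |b| and c >= 0; when b >= 0
     or c >= 2|b| a crude linear estimate suffices, and otherwise evaluating P at
     (1, c/(2|b|)) shows c^2 <= 4a(N - a), i.e. (a/N, c/N) lies under the extremal curve
     g = 2 sqrt(t(1-t)) along which the profile 2t^{4/3} + g^{4/3} is BH_fun^{4/3}.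
   - Lower bound: t x^2 - t y^2 + 2 sqrt(t(1-t)) xy has sup norm 1 (two sums of squares)
     and coefficient norm BH_fun t.
   - Numerics: with u = t^{1/3} the profile becomes 2u^4 + y^2 on the curve
     y^3 = 4u^3(1-u^3); a tangent-line bound and a polynomial certificate give
     BH_fun < 1.83749, while t = 0.9539^3 gives BH_fun > 1.8373. *)

(** * Real powers [rpow] on nonnegative reals *)

Lemma rpow_eq_Rpower x y : 0 < x -> rpow x y = Rpower x y.
Proof. intro Hx; unfold rpow; destruct (Rlt_dec 0 x); [reflexivity | lra]. Qed.

Lemma rpow_0l y : rpow 0 y = 0.
Proof. unfold rpow; destruct (Rlt_dec 0 0); [lra | reflexivity]. Qed.

Lemma rpow_nonneg x y : 0 <= rpow x y.
Proof.
  unfold rpow; destruct (Rlt_dec 0 x); [left; apply exp_pos | lra].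
Qed.

Lemma rpow_1l y : rpow 1 y = 1.
Proof.
  rewrite rpow_eq_Rpower by lra; unfold Rpower.
  rewrite ln_1, Rmult_0_r; apply exp_0.
Qed.

Lemma rpow_mult_distr x y z : 0 <= x -> 0 <= y -> rpow (x * y) z = rpow x z * rpow y z.
Proof.
  intros [Hx | <-] [Hy | <-]; try (rewrite ?Rmult_0_l, ?Rmult_0_r, !rpow_0l; ring).
  rewrite !rpow_eq_Rpower by nra; symmetry; apply Rpower_mult_distr; lra.
Qed.

Lemma rpow_le_l x y z : 0 <= z -> 0 <= x <= y -> rpow x z <= rpow y z.
Proof.
  intros Hz [[Hx | <-] Hxy].
  - rewrite !rpow_eq_Rpower by lra; apply Rle_Rpower_l; lra.
  - rewrite rpow_0l; apply rpow_nonneg.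
Qed.

Lemma rpow_inv_exp x y z : 0 <= x -> y * z = 1 -> rpow (rpow x y) z = x.
Proof.
  intros [Hx | <-] Hyz; [| now rewrite !rpow_0l].
  rewrite (rpow_eq_Rpower x), rpow_eq_Rpower by (auto; apply exp_pos).
  rewrite Rpower_mult, Hyz; apply Rpower_1, Hx.
Qed.

Lemma rpow_pow x y n : 0 <= x -> (0 < n)%nat -> rpow x y ^ n = rpow x (y * INR n).
Proof.
  intros [Hx | <-] Hn.
  - rewrite !rpow_eq_Rpower by auto.
    rewrite <- Rpower_pow by apply exp_pos; apply Rpower_mult.
  - rewrite !rpow_0l; destruct n; [lia | simpl; ring].
Qed.

Lemma rpow_nat x n : 0 <= x -> (0 < n)%nat -> rpow x (INR n) = x ^ n.
Proof.
  intros [Hx | <-] Hn.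
  - rewrite rpow_eq_Rpower by auto; apply Rpower_pow, Hx.
  - rewrite rpow_0l; destruct n; [lia | simpl; ring].
Qed.

(** Cube roots, through which the exponents 4/3 and 3/4 become polynomial. *)
Definition cbrt (x : R) : R := rpow x (1/3).

Lemma cbrt_nonneg x : 0 <= cbrt x.
Proof. apply rpow_nonneg. Qed.

Lemma cbrt_cube x : 0 <= x -> cbrt x ^ 3 = x.
Proof.
  intro Hx; unfold cbrt; rewrite rpow_pow by (auto; lia).
  replace (1/3 * INR 3) with (INR 1) by (simpl; field).
  rewrite rpow_nat by (auto; lia); ring.
Qed.

Lemma rpow_4_3 x : 0 <= x -> rpow x (4/3) = cbrt x ^ 4.
Proof.
  intro Hx; unfold cbrt; rewrite rpow_pow by (auto; lia); f_equal; simpl; field.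
Qed.

Lemma rpow_4_3_split x : 0 <= x -> rpow x (4/3) = x * cbrt x.
Proof.
  intro Hx; rewrite rpow_4_3 by auto.
  rewrite <- (cbrt_cube x Hx) at 2; ring.
Qed.

Lemma rpow_3_4_pow4 x : 0 <= x -> rpow x (3/4) ^ 4 = x ^ 3.
Proof.
  intro Hx; rewrite rpow_pow by (auto; lia).
  replace (3/4 * INR 4) with (INR 3) by (simpl; field).
  apply rpow_nat; auto; lia.
Qed.

Lemma pow_lt_compat a b n : 0 <= a < b -> (0 < n)%nat -> a ^ n < b ^ n.
Proof.
  intros Hab Hn; destruct n as [|n]; [lia |]; simpl.
  pose proof (pow_incr a b n ltac:(lra)); pose proof (pow_lt b n ltac:(lra)).
  pose proof (pow_le a n ltac:(lra)); nra.
Qed.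

Lemma pow_lt_reg a b n : 0 <= a -> 0 <= b -> a ^ n < b ^ n -> a < b.
Proof.
  intros Ha Hb H; destruct (Rlt_le_dec a b) as [| Hba]; [auto |].
  pose proof (pow_incr b a n ltac:(lra)); lra.
Qed.

Lemma pow_le_reg a b n : (0 < n)%nat -> 0 <= a -> 0 <= b -> a ^ n <= b ^ n -> a <= b.
Proof.
  intros Hn Ha Hb H; destruct (Rle_lt_dec a b) as [| Hba]; [auto |].
  pose proof (pow_lt_compat b a n ltac:(lra) Hn); lra.
Qed.

(** * The extremal profile and its numerical range *)

(* The sum 2 t^{4/3} + g^{4/3} of |coefficient|^{4/3} of t x^2 - t y^2 + g xy. *)
Definition profile (t g : R) : R := 2 * rpow t (4/3) + rpow g (4/3).

(* The profile along the extremal curve g = 2 sqrt(t(1-t)); BH_fun is its 3/4-th power. *)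
Definition BH_fun43 (t : R) : R := profile t (2 * sqrt (t * (1 - t))).

Lemma BH_fun_eq t : BH_fun t = rpow (BH_fun43 t) (3/4).
Proof. reflexivity. Qed.

Lemma BH_fun43_nonneg t : 0 <= BH_fun43 t.
Proof.
  unfold BH_fun43, profile.
  pose proof (rpow_nonneg t (4/3)); pose proof (rpow_nonneg (2 * sqrt (t * (1 - t))) (4/3)); lra.
Qed.

(* With u = t^{1/3} and y = (2 sqrt(t(1-t)))^{2/3}, BH_fun43 t = 2u^4 + y^2 and
   y^3 = 4u^3(1-u^3): a polynomial problem on the curve y^3 = 4u^3(1-u^3). *)
Lemma BH_fun43_cbrt_form t : 0 <= t <= 1 ->
  let y := cbrt (2 * sqrt (t * (1 - t))) ^ 2 in
  BH_fun43 t = 2 * cbrt t ^ 4 + y ^ 2 /\ y ^ 3 = 4 * (t * (1 - t)).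
Proof.
  intros Ht y.
  assert (Hs : 0 <= t * (1 - t)) by nra.
  pose proof (sqrt_pos (t * (1 - t))); pose proof (sqrt_sqrt _ Hs).
  split.
  - unfold BH_fun43, profile, y; rewrite !rpow_4_3 by lra; ring.
  - unfold y; replace ((cbrt (2 * sqrt (t * (1 - t))) ^ 2) ^ 3)
      with (cbrt (2 * sqrt (t * (1 - t))) ^ 3 * cbrt (2 * sqrt (t * (1 - t))) ^ 3) by ring.
    rewrite cbrt_cube by lra; nra.
Qed.

Lemma cbrt_le_1 t : 0 <= t <= 1 -> cbrt t <= 1.
Proof.
  intro Ht; apply (pow_le_reg _ _ 3); [lia | apply cbrt_nonneg | lra |].
  rewrite cbrt_cube; lra.
Qed.

Lemma cbrt_pow3 u : 0 <= u -> cbrt (u ^ 3) = u.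
Proof.
  intro Hu; pose proof (pow_le u 3 Hu); pose proof (cbrt_nonneg (u ^ 3)).
  apply Rle_antisym; apply (pow_le_reg _ _ 3); try lia; try lra; rewrite cbrt_cube; lra.
Qed.

(* Tangent-line (AM-GM) bound linearising y^2 in terms of y^3 at the point y = k. *)
Lemma sq_le_cube_tangent y k : 0 <= y -> 0 < k -> y ^ 2 <= k ^ 2 / 3 + 2 / (3 * k) * y ^ 3.
Proof.
  intros Hy Hk.
  assert (0 <= (y - k) ^ 2 * (2 * y + k)) by (apply Rmult_le_pos; [apply pow2_ge_0 | lra]).
  apply Rmult_le_reg_l with (3 * k); [lra |].
  replace (3 * k * (k ^ 2 / 3 + 2 / (3 * k) * y ^ 3)) with (k ^ 3 + 2 * y ^ 3) by (field; lra).
  nra.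
Qed.

(* The resulting one-variable polynomial bound, for the tangent point k = 0.7714;
   certified by an explicit decomposition into visibly nonnegative terms. *)
Lemma tangent_polynomial_bound u : 0 <= u <= 1 ->
  2 * u ^ 4 + (7714/10000) ^ 2 / 3 + 8 / (3 * (7714/10000)) * u ^ 3 * (1 - u ^ 3)
  <= 22505/10000.
Proof.
  intros Hu.
  set (q := 13046926456680193361/5785500000000000000 + 341965022875603/72318750000000 * u
     + 7170179769/964250000 * u ^ 2 + 381548/57855 * u ^ 3 + 40000/11571 * u ^ 4).
  assert (E : 22505/10000
      - (2 * u ^ 4 + (7714/10000) ^ 2 / 3 + 8 / (3 * (7714/10000)) * u ^ 3 * (1 - u ^ 3))
    = (u - 95387/100000) ^ 2 * q
      + (5726314124356587753728797/19285000000000000000000000000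
         - 108200356991472974293/482125000000000000000000 * u))
    by (unfold q; field).
  assert (Hq : 0 <= q).
  { unfold q; pose proof (pow_le u 2 ltac:(lra)); pose proof (pow_le u 3 ltac:(lra));
    pose proof (pow_le u 4 ltac:(lra)); lra. }
  assert (0 <= (u - 95387/100000) ^ 2 * q) by (apply Rmult_le_pos; [apply pow2_ge_0 | auto]).
  lra.
Qed.

Lemma BH_fun43_upper t : 0 <= t <= 1 -> BH_fun43 t <= 22505/10000.
Proof.
  intros Ht; destruct (BH_fun43_cbrt_form t Ht) as [E Hy3]; rewrite E.
  set (u := cbrt t) in *; set (y := cbrt (2 * sqrt (t * (1 - t))) ^ 2) in *.
  assert (Hu3 : u ^ 3 = t) by (apply cbrt_cube; lra).
  assert (Hu : 0 <= u <= 1) by (split; [apply cbrt_nonneg | apply cbrt_le_1; lra]).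
  pose proof (sq_le_cube_tangent y (7714/10000) ltac:(apply pow2_ge_0) ltac:(lra)).
  pose proof (tangent_polynomial_bound u Hu).
  rewrite Hy3, <- Hu3 in *.
  replace (8 / (3 * (7714/10000)) * u ^ 3 * (1 - u ^ 3))
    with (2 / (3 * (7714/10000)) * (4 * (u ^ 3 * (1 - u ^ 3)))) in * by field.
  lra.
Qed.

(* The near-maximiser t = 0.9539^3. *)
Definition t_star : R := (9539/10000) ^ 3.

Lemma t_star_range : 1/2 <= t_star <= 1.
Proof. unfold t_star; lra. Qed.

Lemma BH_fun43_t_star : 22504/10000 <= BH_fun43 t_star.
Proof.
  pose proof t_star_range as Ht.
  destruct (BH_fun43_cbrt_form t_star ltac:(lra)) as [E Hy3]; rewrite E.
  set (y := cbrt (2 * sqrt (t_star * (1 - t_star))) ^ 2) in *.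
  assert (Hy : (878083/1000000) ^ 2 <= y).
  { apply (pow_le_reg _ _ 3); [lia | lra | apply pow2_ge_0 |].
    rewrite Hy3; unfold t_star; lra. }
  assert ((878083/1000000) ^ 4 <= y ^ 2)
    by (replace ((878083/1000000) ^ 4) with (((878083/1000000) ^ 2) ^ 2) by ring;
        apply pow_incr; lra).
  unfold t_star at 1; rewrite cbrt_pow3 by lra; lra.
Qed.

Lemma BH_fun_upper t : 0 <= t <= 1 -> BH_fun t < 183749/100000.
Proof.
  intros Ht; apply (pow_lt_reg _ _ 4); [apply rpow_nonneg | lra |].
  rewrite BH_fun_eq, rpow_3_4_pow4 by apply BH_fun43_nonneg.
  pose proof (BH_fun43_upper t Ht); pose proof (BH_fun43_nonneg t).
  assert (BH_fun43 t ^ 3 <= (22505/10000) ^ 3) by (apply pow_incr; lra).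
  lra.
Qed.

Lemma BH_fun_t_star : 18373/10000 < BH_fun t_star.
Proof.
  apply (pow_lt_reg _ _ 4); [lra | apply rpow_nonneg |].
  rewrite BH_fun_eq, rpow_3_4_pow4 by apply BH_fun43_nonneg.
  pose proof BH_fun43_t_star.
  assert ((22504/10000) ^ 3 <= BH_fun43 t_star ^ 3) by (apply pow_incr; lra).
  lra.
Qed.

(** * Quadratic forms bounded on the square [-1,1]^2 *)

Definition qform (a b c u v : R) : R := a * u ^ 2 + b * v ^ 2 + c * u * v.

Definition qform_bounded (a b c N : R) : Prop :=
  forall u v, -1 <= u <= 1 -> -1 <= v <= 1 -> Rabs (qform a b c u v) <= N.

Definition coef_sum43 (a b c : R) : R :=
  rpow (Rabs a) (4/3) + rpow (Rabs b) (4/3) + rpow (Rabs c) (4/3).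

Lemma qform_bounded_at a b c N u v : qform_bounded a b c N ->
  -1 <= u <= 1 -> -1 <= v <= 1 -> - N <= qform a b c u v <= N.
Proof.
  intros Hq Hu Hv; specialize (Hq u v Hu Hv).
  pose proof (Rle_abs (qform a b c u v)); pose proof (Rle_abs (- qform a b c u v)).
  rewrite Rabs_Ropp in *; lra.
Qed.

Lemma qform_bounded_flip a b c N : qform_bounded a b c N -> qform_bounded a b (- c) N.
Proof.
  intros Hq u v Hu Hv.
  replace (qform a b (- c) u v) with (qform a b c (- u) v) by (unfold qform; ring).
  apply Hq; lra.
Qed.

Lemma qform_bounded_opp a b c N : qform_bounded a b c N -> qform_bounded (- a) (- b) (- c) N.
Proof.
  intros Hq u v Hu Hv.
  replace (qform (- a) (- b) (- c) u v) with (- qform a b c u v) by (unfold qform; ring).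
  rewrite Rabs_Ropp; auto.
Qed.

Lemma qform_bounded_swap a b c N : qform_bounded a b c N -> qform_bounded b a c N.
Proof.
  intros Hq u v Hu Hv.
  replace (qform b a c u v) with (qform a b c v u) by (unfold qform; ring); auto.
Qed.

Lemma coef_sum43_flip a b c : coef_sum43 a b (- c) = coef_sum43 a b c.
Proof. unfold coef_sum43; rewrite Rabs_Ropp; reflexivity. Qed.

Lemma coef_sum43_opp a b c : coef_sum43 (- a) (- b) (- c) = coef_sum43 a b c.
Proof. unfold coef_sum43; rewrite !Rabs_Ropp; reflexivity. Qed.

Lemma coef_sum43_swap a b c : coef_sum43 b a c = coef_sum43 a b c.
Proof. unfold coef_sum43; ring. Qed.

(* Crude bound: x^{4/3} <= x N^{1/3} for 0 <= x <= N, summed. *)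
Lemma sum43_le_linear x y z N k : 0 <= x <= N -> 0 <= y <= N -> 0 <= z <= N ->
  x + y + z <= k * N -> rpow x (4/3) + rpow y (4/3) + rpow z (4/3) <= k * rpow N (4/3).
Proof.
  intros Hx Hy Hz Hsum.
  assert (Hle : forall w, 0 <= w <= N -> rpow w (4/3) <= w * cbrt N).
  { intros w Hw; rewrite rpow_4_3_split by lra.
    apply Rmult_le_compat_l; [lra | apply rpow_le_l; lra]. }
  pose proof (Hle x Hx); pose proof (Hle y Hy); pose proof (Hle z Hz).
  pose proof (cbrt_nonneg N).
  rewrite (rpow_4_3_split N) by lra.
  assert ((x + y + z) * cbrt N <= k * N * cbrt N) by (apply Rmult_le_compat_r; lra).
  lra.
Qed.

(** The bound sum |coef|^{4/3} <= M ||P||^{4/3}, for any M dominating the extremal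
    profile on [1/2, 1] (and M >= 2, which covers the degenerate configurations). *)
Section QuadraticFormBound.

Variable M : R.
Hypothesis M_dominates : forall t, 1/2 <= t <= 1 -> BH_fun43 t <= M.
Hypothesis M_ge_2 : 2 <= M.

(* Every profile under the extremal curve (and under g = 2t) is at most M: for t >= 1/2
   by monotonicity in g, for t < 1/2 by monotonicity in t up to the value at t = 1/2. *)
Lemma profile_le t g : 0 <= t <= 1 -> 0 <= g <= 2 * t -> g * g <= 4 * (t * (1 - t)) ->
  profile t g <= M.
Proof.
  intros Ht Hg Hgg.
  destruct (Rle_lt_dec (1/2) t) as [Ht2 | Ht2].
  - apply Rle_trans with (BH_fun43 t); [| apply M_dominates; lra].
    unfold BH_fun43, profile; apply Rplus_le_compat_l, rpow_le_l; [lra | split; [lra |]].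
    assert (Hs : 0 <= t * (1 - t)) by nra.
    pose proof (sqrt_sqrt _ Hs); pose proof (sqrt_pos (t * (1 - t))); nra.
  - apply Rle_trans with (BH_fun43 (1/2)); [| apply M_dominates; lra].
    unfold BH_fun43, profile.
    replace (2 * sqrt (1/2 * (1 - 1/2))) with 1
      by (replace (1/2 * (1 - 1/2)) with (1/2 * (1/2)) by field; rewrite sqrt_square; lra).
    rewrite rpow_1l.
    assert (rpow g (4/3) <= rpow 2 (4/3) * rpow t (4/3))
      by (rewrite <- rpow_mult_distr by lra; apply rpow_le_l; lra).
    assert (rpow t (4/3) <= rpow (1/2) (4/3)) by (apply rpow_le_l; lra).
    assert (rpow 2 (4/3) * rpow (1/2) (4/3) = 1)
      by (rewrite <- rpow_mult_distr by lra; replace (2 * (1/2)) with 1 by field; apply rpow_1l).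
    pose proof (rpow_nonneg 2 (4/3)); nra.
Qed.

(* The essential case a >= |b|, b = -e < 0, 0 <= c < 2e: testing P at (1, c/(2e)) gives
   c^2 <= 4a(N - a), which after scaling by N puts (a, c) under the extremal curve. *)
Lemma qform_bound_mixed_signs a e c N : 0 < e <= a -> 0 <= c < 2 * e ->
  qform_bounded a (- e) c N -> rpow a (4/3) + rpow e (4/3) + rpow c (4/3) <= M * rpow N (4/3).
Proof.
  intros He Hc Hq.
  assert (HaN : a <= N)
    by (pose proof (qform_bounded_at _ _ _ _ 1 0 Hq ltac:(lra) ltac:(lra)); unfold qform in *; lra).
  assert (Hv : 0 <= c / (2 * e) <= 1).
  { split; [apply Rmult_le_pos; [lra | left; apply Rinv_0_lt_compat; lra] |].
    apply Rmult_le_reg_r with (2 * e); [lra |]; field_simplify; lra. }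
  assert (Hcc : c * c <= 4 * e * (N - a)).
  { pose proof (qform_bounded_at _ _ _ _ 1 (c / (2 * e)) Hq ltac:(lra) ltac:(lra)) as Hval.
    replace (qform a (- e) c 1 (c / (2 * e))) with (a + c * c / (4 * e)) in Hval
      by (unfold qform; field; lra).
    assert (c * c / (4 * e) * (4 * e) <= (N - a) * (4 * e)) by (apply Rmult_le_compat_r; lra).
    replace (c * c / (4 * e) * (4 * e)) with (c * c) in * by (field; lra); lra. }
  assert (HN : 0 < N) by lra.
  set (t := a / N); set (g := c / N).
  assert (Ha : a = t * N) by (unfold t; field; lra).
  assert (Hcg : c = g * N) by (unfold g; field; lra).
  assert (Ht : 0 <= t <= 1) by (split; nra).
  assert (Hg : 0 <= g <= 2 * t) by (split; nra).
  assert (Hgg : g * g <= 4 * (t * (1 - t))).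
  { assert (Hcc' : (g * g) * (N * N) <= (4 * (t * (1 - t))) * (N * N))
      by (rewrite Ha, Hcg in Hcc; nra).
    apply Rmult_le_reg_r in Hcc'; nra. }
  pose proof (profile_le t g Ht Hg Hgg).
  assert (rpow e (4/3) <= rpow a (4/3)) by (apply rpow_le_l; lra).
  assert (E : 2 * rpow a (4/3) + rpow c (4/3) = profile t g * rpow N (4/3))
    by (unfold profile; rewrite Ha, Hcg, !rpow_mult_distr by lra; ring).
  pose proof (rpow_nonneg N (4/3)); nra.
Qed.

Lemma qform_bound_normalized a b c N : 0 <= a -> 0 <= c -> Rabs b <= a ->
  qform_bounded a b c N -> coef_sum43 a b c <= M * rpow N (4/3).
Proof.
  intros Ha Hc Hb Hq; unfold coef_sum43; rewrite (Rabs_pos_eq a), (Rabs_pos_eq c) by lra.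
  pose proof (qform_bounded_at _ _ _ _ 1 1 Hq ltac:(lra) ltac:(lra)) as H11.
  pose proof (qform_bounded_at _ _ _ _ 1 0 Hq ltac:(lra) ltac:(lra)) as H10.
  unfold qform in H11, H10; pose proof (rpow_nonneg N (4/3)).
  destruct (Rle_lt_dec 0 b) as [Hb0 | Hb0].
  - rewrite Rabs_pos_eq in * by lra.
    pose proof (sum43_le_linear a b c N 1 ltac:(lra) ltac:(lra) ltac:(lra) ltac:(lra)); nra.
  - rewrite Rabs_left in * by lra.
    destruct (Rle_lt_dec (2 * - b) c) as [Hc2 | Hc2].
    + pose proof (sum43_le_linear a (- b) c N 2 ltac:(lra) ltac:(lra) ltac:(lra) ltac:(lra)); nra.
    + apply qform_bound_mixed_signs; [lra | lra | now rewrite Ropp_involutive].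
Qed.

Lemma qform_coef_bound a b c N : qform_bounded a b c N -> coef_sum43 a b c <= M * rpow N (4/3).
Proof.
  assert (Hc : forall a b c, 0 <= a -> Rabs b <= a -> qform_bounded a b c N ->
                 coef_sum43 a b c <= M * rpow N (4/3)).
  { intros a' b' c' Ha Hb Hq; destruct (Rle_lt_dec 0 c') as [Hc | Hc].
    - apply qform_bound_normalized; auto.
    - rewrite <- coef_sum43_flip; apply qform_bound_normalized, qform_bounded_flip; auto; lra. }
  assert (Hab : forall a b c, Rabs b <= Rabs a -> qform_bounded a b c N ->
                  coef_sum43 a b c <= M * rpow N (4/3)).
  { intros a' b' c' Hb Hq; destruct (Rle_lt_dec 0 a') as [Ha | Ha].
    - rewrite (Rabs_pos_eq a') in Hb by lra; apply Hc; auto.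
    - rewrite (Rabs_left a') in Hb by lra.
      rewrite <- coef_sum43_opp; apply Hc; [lra | rewrite Rabs_Ropp; lra |].
      apply qform_bounded_opp, Hq. }
  intros Hq; destruct (Rle_lt_dec (Rabs b) (Rabs a)).
  - apply Hab; auto.
  - rewrite <- coef_sum43_swap; apply Hab, qform_bounded_swap; auto; lra.
Qed.

End QuadraticFormBound.

(** * Two-variable quadratic polynomials on l_inf^2 *)

Definition point2 (u v : R) : nat -> R := fun i => match i with O => u | _ => v end.

Lemma hpoly_eval_2_2 a x :
  hpoly_eval 2 2 a x = qform (a [2; 0]%nat) (a [0; 2]%nat) (a [1; 1]%nat) (x 0%nat) (x 1%nat).
Proof. unfold hpoly_eval, qform; simpl; ring. Qed.

Lemma coef_norm_2_2 a :
  coef_norm 2 2 a = rpow (coef_sum43 (a [2; 0]%nat) (a [0; 2]%nat) (a [1; 1]%nat)) (3/4).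
Proof.
  unfold coef_norm; simpl mindices; cbn [fold_right].
  replace (2 * INR 2 / (INR 2 + 1)) with (4/3) by (simpl; field).
  replace ((INR 2 + 1) / (2 * INR 2)) with (3/4) by (simpl; field).
  f_equal; unfold coef_sum43; ring.
Qed.

Lemma hpoly_2_2_qform_bounded a N : is_upper_bound (hpoly_values 2 2 a) N ->
  qform_bounded (a [2; 0]%nat) (a [0; 2]%nat) (a [1; 1]%nat) N.
Proof.
  intros HN u v Hu Hv; apply HN; exists (point2 u v); split.
  - intros [|i] _; auto.
  - rewrite hpoly_eval_2_2; reflexivity.
Qed.

Lemma BH_ratios_2_2_le M r : (forall t, 1/2 <= t <= 1 -> BH_fun43 t <= M) -> 2 <= M ->
  BH_ratios 2 2 r -> r <= rpow M (3/4).
Proof.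
  intros HF HM [a [_ [N [HN ->]]]].
  pose proof (hpoly_2_2_qform_bounded a N (proj1 HN)) as Hq.
  pose proof (qform_bounded_at _ _ _ _ 0 0 Hq ltac:(lra) ltac:(lra)) as HN0.
  pose proof (qform_coef_bound M HF HM _ _ _ _ Hq) as Hsum.
  assert (Hcoef : coef_norm 2 2 a <= rpow M (3/4) * N).
  { rewrite coef_norm_2_2.
    apply Rle_trans with (rpow (M * rpow N (4/3)) (3/4)).
    - apply rpow_le_l; [lra | split; [unfold coef_sum43 | exact Hsum]].
      pose proof (rpow_nonneg (Rabs (a [2; 0]%nat)) (4/3));
      pose proof (rpow_nonneg (Rabs (a [0; 2]%nat)) (4/3));
      pose proof (rpow_nonneg (Rabs (a [1; 1]%nat)) (4/3)); lra.
    - rewrite rpow_mult_distr, rpow_inv_exp by (lra || apply rpow_nonneg || field); lra. }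
  pose proof (rpow_nonneg M (3/4)).
  destruct (Req_dec N 0) as [-> | HN0'].
  - unfold Rdiv; rewrite Rinv_0, Rmult_0_r; lra.
  - apply Rmult_le_reg_r with N; [lra |].
    unfold Rdiv; rewrite Rmult_assoc, Rinv_l by lra; lra.
Qed.

(** * The extremal polynomials t x^2 - t y^2 + 2 sqrt(t(1-t)) xy *)

Definition extremal_poly (t : R) (al : list nat) : R :=
  match al with
  | [2; 0]%nat => t
  | [0; 2]%nat => - t
  | [1; 1]%nat => 2 * sqrt (t * (1 - t))
  | _ => 0
  end.

(* With c^2 = 4t(1-t), u^2 - P = t (v - cu/(2t))^2 and v^2 + P = t (u + cv/(2t))^2,
   so -v^2 <= P(u,v) <= u^2 and |P| <= 1 on the square. *)
Lemma extremal_qform_bounded t c : 0 < t -> c * c = 4 * (t * (1 - t)) ->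
  qform_bounded t (- t) c 1.
Proof.
  intros Ht Hc u v Hu Hv; unfold qform.
  assert (Hk : c * c / (4 * t) = 1 - t) by (rewrite Hc; field; lra).
  assert (E1 : u ^ 2 - (t * u ^ 2 + - t * v ^ 2 + c * u * v) = t * (v - c * u / (2 * t)) ^ 2).
  { replace (t * (v - c * u / (2 * t)) ^ 2) with (t * v ^ 2 - c * u * v + c * c / (4 * t) * u ^ 2)
      by (field; lra).
    rewrite Hk; ring. }
  assert (E2 : v ^ 2 + (t * u ^ 2 + - t * v ^ 2 + c * u * v) = t * (u + c * v / (2 * t)) ^ 2).
  { replace (t * (u + c * v / (2 * t)) ^ 2) with (t * u ^ 2 + c * u * v + c * c / (4 * t) * v ^ 2)
      by (field; lra).
    rewrite Hk; ring. }
  assert (0 <= t * (v - c * u / (2 * t)) ^ 2) by (apply Rmult_le_pos; [lra | apply pow2_ge_0]).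
  assert (0 <= t * (u + c * v / (2 * t)) ^ 2) by (apply Rmult_le_pos; [lra | apply pow2_ge_0]).
  apply Rabs_le; nra.
Qed.

(* The extremal polynomial has sup norm exactly 1, attained at (1, c/(2t)). *)
Lemma extremal_sup_norm t : 1/2 <= t <= 1 -> is_lub (hpoly_values 2 2 (extremal_poly t)) 1.
Proof.
  intros Ht; set (c := 2 * sqrt (t * (1 - t))).
  assert (Hs : 0 <= t * (1 - t)) by nra.
  assert (Hc0 : 0 <= c) by (unfold c; pose proof (sqrt_pos (t * (1 - t))); lra).
  assert (Hc2 : c * c = 4 * (t * (1 - t))) by (unfold c; pose proof (sqrt_sqrt _ Hs); nra).
  split.
  - intros r [x [Hx ->]]; rewrite hpoly_eval_2_2; cbn [extremal_poly].
    apply (extremal_qform_bounded t c); [lra | auto | apply Hx | apply Hx]; lia.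
  - intros b Hb; apply Hb; exists (point2 1 (c / (2 * t))); split.
    + assert (Hv : 0 <= c / (2 * t) <= 1).
      { split; [apply Rmult_le_pos; [lra | left; apply Rinv_0_lt_compat; lra] |].
        apply Rmult_le_reg_r with (2 * t); [lra |]; field_simplify; nra. }
      intros [|i] _; simpl; lra.
    + rewrite hpoly_eval_2_2; cbn [extremal_poly point2]; fold c; unfold qform.
      replace (t * 1 ^ 2 + - t * (c / (2 * t)) ^ 2 + c * 1 * (c / (2 * t))) with 1.
      * rewrite Rabs_pos_eq; lra.
      * replace (t * 1 ^ 2 + - t * (c / (2 * t)) ^ 2 + c * 1 * (c / (2 * t)))
          with (t + c * c / (4 * t)) by (field; lra).
        rewrite Hc2; field; lra.
Qed.

Lemma extremal_ratio t : 1/2 <= t <= 1 -> BH_ratios 2 2 (BH_fun t).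
Proof.
  intros Ht; exists (extremal_poly t); split.
  - exists [2; 0]%nat; split; [simpl; tauto | simpl; lra].
  - exists 1; split; [apply extremal_sup_norm, Ht |].
    rewrite coef_norm_2_2, BH_fun_eq, Rdiv_1_r; cbn [extremal_poly].
    unfold coef_sum43, BH_fun43, profile.
    pose proof (sqrt_pos (t * (1 - t))).
    rewrite Rabs_Ropp, !Rabs_pos_eq by lra; f_equal; ring.
Qed.

Theorem mainTheorem7 :
  exists L : R,
    is_lub (BH_ratios 2 2) L /\
    is_lub (fun r => exists t, 1/2 <= t <= 1 /\ r = BH_fun t) L /\
    (forall M, (forall n, is_upper_bound (BH_ratios n 2) M) -> L <= M) /\
    18373/10000 < L < 18375/10000.
Proof.
  set (S := fun r => exists t, 1/2 <= t <= 1 /\ r = BH_fun t).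
  assert (Hbound : is_upper_bound S (183749/100000))
    by (intros r [t [Ht ->]]; left; apply BH_fun_upper; lra).
  destruct (completeness S) as [L HL]; [now exists (183749/100000) | exists (BH_fun 1), 1; split; [lra | reflexivity] |].
  assert (Hlow : 18373/10000 < L).
  { apply Rlt_le_trans with (BH_fun t_star); [apply BH_fun_t_star |].
    apply HL; exists t_star; split; [apply t_star_range | reflexivity]. }
  assert (Hup : L <= 183749/100000) by (apply HL, Hbound).
  (* M = L^{4/3} dominates the profile, so every ratio is at most M^{3/4} = L. *)
  assert (HF : forall t, 1/2 <= t <= 1 -> BH_fun43 t <= rpow L (4/3)).
  { intros t Ht; rewrite <- (rpow_inv_exp (BH_fun43 t) (3/4) (4/3))
      by (apply BH_fun43_nonneg || field).
    apply rpow_le_l; [lra | split; [apply rpow_nonneg | apply HL; now exists t]]. }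
  assert (HM : 2 <= rpow L (4/3))
    by (pose proof (HF t_star t_star_range); pose proof BH_fun43_t_star; lra).
  assert (Hratios : is_lub (BH_ratios 2 2) L).
  { split.
    - intros r Hr; rewrite <- (rpow_inv_exp L (4/3) (3/4)) by (lra || field).
      apply (BH_ratios_2_2_le _ r HF HM Hr).
    - intros b Hb; apply HL; intros r [t [Ht ->]]; apply Hb, extremal_ratio, Ht. }
  exists L; split; [exact Hratios |]; split; [exact HL |]; split; [| lra].
  intros M HM'; apply Hratios, HM'.
Qed.
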